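(* Let $(X,d,\mu)$ be an unbounded metric measure space with base point $a$ and let $Q>0$. If $\mu$ is Ahlfors $Q$-regular on $X$ and $q=2Q$, then $\hat\mu_q$ is Ahlfors $Q$-regular on $(\widehat X,\hat d)$, i.e. $\hat\mu_q(\widehat B(x,r))\simeq r^Q$ for all $x\in\widehat X$ and $0<r\le 2\operatorname{diam}_{\hat d}\widehat X=2$, with comparison constants depending only on $Q$ and the Ahlfors regularity constants of $\mu$.
   Context: $\mu$ is a positive complete Borel measure on $(X,d)$ with $0<\mu(B)<\infty$ for every (open) ball. $\mu$ is Ahlfors $Q$-regular if there is $C\ge1$ with $C^{-1}r^Q\le\mu(B(x,r))\le Cr^Q$ for all $x\in X$ and $0<r\le2\operatorname{diam}X$. Sphericalization: $|x|=d(x,a)$, $\widehat X=X\cup\{\infty\}$, $d_a(x,y)=\frac{d(x,y)}{(1+|x|)(1+|y|)}$ for $x,y\in X$, $d_a(x,\infty)=d_a(\infty,x)=\frac1{1+|x|}$, $d_a(\infty,\infty)=0$; $\hat d(x,y)=\inf\sum_{j=1}^k d_a(x_{j-1},x_j)$ over finite chains $x=x_0,\dots,x_k=y$ in $\widehat X$; $\widehat B(x,r)=\{y\in\widehat X:\hat d(x,y)<r\}$; $\operatorname{diam}_{\hat d}\widehat X=1$. The measure $\hat\mu_q$ on $\widehat X$ is $d\hat\mu_q(x)=\frac{d\mu(x)}{(1+|x|)^q}$ on $X$ with $\hat\mu_q(\{\infty\})=0$. *)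

From HB Require Import structures.
From mathcomp Require Import all_boot all_order all_algebra.
From mathcomp Require Import all_classical all_reals all_analysis.
Set Implicit Arguments. Unset Strict Implicit. Unset Printing Implicit Defensive.
Import Order.TTheory GRing.Theory Num.Theory.
Local Open Scope classical_set_scope.
Local Open Scope ring_scope.

Section Defs.
Context {R : realType}.

Definition is_metric {S : Type} (dist : S -> S -> R) :=
  [/\ forall x y, 0 <= dist x y,
      forall x y, dist x y = 0 <-> x = y,
      forall x y, dist x y = dist y x &
      forall x y z, dist x z <= dist x y + dist y z].

Definition mball {S : Type} (dist : S -> S -> R) (x : S) (r : R) : set S :=
  [set y | dist x y < r].

Definition dopen {S : Type} (dist : S -> S -> R) (A : set S) :=
  forall x, A x -> exists2 r, 0 < r & mball dist x r `<=` A.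

Definition mdiam {S : Type} (dist : S -> S -> R) : \bar R :=
  ereal_sup [set (dist x y)%:E | x in [set: S] & y in [set: S]].

Definition unbounded {S : Type} (dist : S -> S -> R) :=
  forall M : R, exists x y, M < dist x y.

Definition ahlfors_regular {S : Type} (dist : S -> S -> R)
    (nu : set S -> \bar R) (Q C : R) :=
  1 <= C /\
  forall x r, 0 < r -> (r%:E <= 2%:E * mdiam dist)%E ->
    ((C^-1 * r `^ Q)%:E <= nu (mball dist x r))%E /\
    (nu (mball dist x r) <= (C * r `^ Q)%:E)%E.

(** Sphericalization: widehat X = option S, None playing the role of infinity. *)
Definition sph_da {S : Type} (dist : S -> S -> R) (a : S)
    (x y : option S) : R :=
  match x, y with
  | Some x, Some y => dist x y / ((1 + dist x a) * (1 + dist y a))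
  | Some x, None | None, Some x => (1 + dist x a)^-1
  | None, None => 0
  end.

Fixpoint chain_len {S : Type} (f : S -> S -> R) (x : S) (s : seq S) (y : S) : R :=
  match s with
  | [::] => f x y
  | z :: s' => f x z + chain_len f z s' y
  end.

Definition sph_dist {S : Type} (dist : S -> S -> R) (a : S)
    (x y : option S) : R :=
  inf [set chain_len (sph_da dist a) x s y | s in [set: seq (option S)]].

(** The measure hat mu_q: d hat mu_q = d mu / (1+|x|)^q on X, hat mu_q({oo}) = 0. *)
Definition sph_measure {dsp : measure_display} {T : measurableType dsp}
    (dist : T -> T -> R) (a : T) (mu : set T -> \bar R) (q : R)
    (E : set (option T)) : \bar R :=
  (\int[mu]_(x in [set x | E (Some x)]) (((1 + dist x a) `^ q)^-1)%:E)%E.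

End Defs.

From HB Require Import structures.
From mathcomp Require Import all_boot all_order all_algebra.
From mathcomp Require Import all_classical all_reals all_analysis.
From mathcomp Require Import measurable_realfun.
From mathcomp Require Import ring lra.
Import Order.TTheory GRing.Theory Num.Theory.
Local Open Scope classical_set_scope.
Local Open Scope ring_scope.

(* Write |x| = d(x,a) and d_a(u,oo) = 1/(1+|u|).  This quantity is 1-Lipschitz
   for the sphericalized distance, and a chain staying at distance >= m from oo
   has each link at least m^2 times its length in X.  Hence, for a ball of
   radius r around x with r <~ 1/(1+|x|), the sphericalized ball and the ball
   of X of radius comparable to r (1+|x|)^2 contain each other, the density
   (1+|y|)^(-2Q) is comparable to (1+|x|)^(-2Q) there, and Ahlfors regularity
   of mu gives a measure ~ r^Q: the choice q = 2Q makes the powers of 1+|x|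
   cancel.  A ball of radius r >~ 1/(1+|c|) lies in {1+|y| > 1/(3r)}, whose
   measure is O(r^Q) by summing over dyadic annuli; it also contains the ball
   of X of radius 2/r around a point z with |z| ~ 4/r, and such a point exists
   because Ahlfors regularity forces annuli of a fixed ratio to be nonempty. *)

Section chains.
Context {R : realType} {S : Type} {f : S -> S -> R}.

Lemma chain_len_cat u s1 v s2 w :
  chain_len f u (s1 ++ v :: s2) w = chain_len f u s1 v + chain_len f v s2 w.
Proof. by elim: s1 u => [|z s IH] u //=; rewrite IH addrA. Qed.

Lemma chain_len_ge0 :
  (forall x y, 0 <= f x y) -> forall u s v, 0 <= chain_len f u s v.
Proof.
move=> f0 u s v; elim: s u => [|z s IH] u /=; first exact: f0.
by rewrite addr_ge0.
Qed.

Lemma chain_len_lipschitz {g : S -> R} :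
  (forall x y, g x - g y <= f x y) -> forall u s v, g u - g v <= chain_len f u s v.
Proof.
move=> gf u s v; elim: s u => [|z s IH] u /=; first exact: gf.
by have := gf u z; have := IH z; lra.
Qed.

End chains.

Section sphericalization.
Context {R : realType} {T : Type} {dist : T -> T -> R} (a : T).
Hypothesis dist_metric : is_metric dist.

Local Notation da := (sph_da dist a).
Local Notation dh := (sph_dist dist a).
Local Notation dinf u := (sph_da dist a u None).

Let dist_ge0 x y : 0 <= dist x y. Proof. by case: dist_metric. Qed.
Let distC x y : dist x y = dist y x. Proof. by case: dist_metric. Qed.
Let dist_triangle x y z : dist x z <= dist x y + dist y z.
Proof. by case: dist_metric. Qed.

Let norm1_gt0 x : 0 < 1 + dist x a. Proof. by rewrite ltr_pwDl. Qed.

Lemma sph_da_ge0 u v : 0 <= da u v.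
Proof.
case: u => [x|]; case: v => [y|]; rewrite /sph_da //.
- by rewrite divr_ge0 // mulr_ge0 // ltW.
- by rewrite invr_ge0 ltW.
- by rewrite invr_ge0 ltW.
Qed.

Lemma sph_daC u v : da u v = da v u.
Proof.
by case: u => [x|]; case: v => [y|]; rewrite /sph_da // distC [_ * (1 + _)]mulrC.
Qed.

Lemma sph_da_inf_gt0 x : 0 < dinf (Some x).
Proof. by rewrite invr_gt0. Qed.

Lemma sph_da_inf_le1 u : dinf u <= 1.
Proof. by case: u => [x|] //=; rewrite invr_le1 ?unitf_gt0 // lerDl. Qed.

Lemma sph_da_le1 u v : da u v <= 1.
Proof.
case: u => [x|]; case: v => [y|]; last by rewrite /sph_da.
- rewrite /sph_da ler_pdivrMr ?mulr_gt0 // mul1r.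
  have := dist_triangle x a y; rewrite (distC a y).
  by have := dist_ge0 x a; have := dist_ge0 y a; nra.
- exact: sph_da_inf_le1.
- by rewrite sph_daC sph_da_inf_le1.
Qed.

Lemma sph_da_SomeE x y :
  da (Some x) (Some y) = dist x y * (dinf (Some x) * dinf (Some y)).
Proof. by rewrite /= invfM. Qed.

Lemma sph_da_inf_lipschitz u v : dinf u - dinf v <= da u v.
Proof.
case: u => [x|]; case: v => [y|] /=; rewrite ?subrr ?subr0 ?sub0r //; last first.
  by rewrite lerNl (le_trans _ (ltW (sph_da_inf_gt0 y))) // oppr_le0 invr_ge0 ltW.
have Nx := norm1_gt0 x; have Ny := norm1_gt0 y.
rewrite -[_ - _](@mulfK _ ((1 + dist x a) * (1 + dist y a))) ?gt_eqF ?mulr_gt0 //.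
rewrite ler_pM2r ?invr_gt0 ?mulr_gt0 //.
rewrite mulrBl mulrA mulVf ?gt_eqF // mul1r mulrCA mulVf ?gt_eqF // mulr1.
by have := dist_triangle y x a; rewrite (distC y x); lra.
Qed.

Let chains u v := [set chain_len da u s v | s in [set: seq (option T)]].

Let chains_lb u v : has_lbound (chains u v).
Proof. by exists 0 => _ [s _ <-]; exact: (chain_len_ge0 sph_da_ge0). Qed.

Let chains_neq0 u v : chains u v !=set0.
Proof. by exists (da u v), [::]. Qed.

Lemma sph_dist_le_chain u s v : dh u v <= chain_len da u s v.
Proof. by apply: (ge_inf (chains_lb u v)); exists s. Qed.

Lemma sph_dist_ge m u v : (forall s, m <= chain_len da u s v) -> m <= dh u v.
Proof. by move=> hm; apply: lb_le_inf (chains_neq0 u v) _ => _ [s _ <-]. Qed.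

Lemma sph_dist_approx u v e :
  0 < e -> exists s, chain_len da u s v < dh u v + e.
Proof.
move=> e0; have [_ [s _ <-] ?] := inf_adherent e0 (conj (chains_neq0 u v) (chains_lb u v)).
by exists s.
Qed.

Lemma sph_dist_le_da u v : dh u v <= da u v.
Proof. exact: (sph_dist_le_chain u [::] v). Qed.

Lemma sph_dist_le1 u v : dh u v <= 1.
Proof. exact: le_trans (sph_dist_le_da u v) (sph_da_le1 u v). Qed.

Lemma sph_mdiam_le1 : (mdiam dh <= 1%:E)%E.
Proof. by apply: ge_ereal_sup => _ [u _ [v _ <-]]; rewrite lee_fin sph_dist_le1. Qed.

Lemma sph_dist_triangle u v w : dh u w <= dh u v + dh v w.
Proof.
apply/ler_addgt0Pr => e e0; have e2 : 0 < e / 2 by rewrite divr_gt0.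
have [s1 h1] := sph_dist_approx u v _ e2; have [s2 h2] := sph_dist_approx v w _ e2.
have := sph_dist_le_chain u (s1 ++ v :: s2) w; rewrite chain_len_cat.
by move: h1 h2; lra.
Qed.

Lemma sph_dist_inf_lipschitz u v : `|dinf u - dinf v| <= dh u v.
Proof.
apply/ler_normlP; split; apply: sph_dist_ge => s.
  suff : - dinf u - - dinf v <= chain_len da u s v by lra.
  apply: (@chain_len_lipschitz _ _ _ (fun w => - dinf w)) => x y.
  by rewrite (sph_daC x y); have := sph_da_inf_lipschitz y x; cbv beta; lra.
exact: (chain_len_lipschitz sph_da_inf_lipschitz).
Qed.

Lemma sph_dist_le_via_inf u v : dh u v <= dinf u + dinf v.
Proof. by apply: le_trans (sph_dist_le_chain u [:: None] v) _; rewrite /= sph_daC. Qed.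

Lemma sph_dist_le_dist x y : dh (Some x) (Some y) <= dist x y.
Proof.
apply: le_trans (sph_dist_le_da _ _) _; rewrite sph_da_SomeE ler_piMr //.
have := sph_da_inf_le1 (Some x); have := sph_da_inf_le1 (Some y).
have := sph_da_inf_gt0 x; have := sph_da_inf_gt0 y; nra.
Qed.

Let Some_of_inf_gt0 u : 0 < dinf u -> exists x, u = Some x.
Proof. by case: u => [x|] h; [exists x | rewrite ltxx in h]. Qed.

Lemma sph_da_ge_dist m x y : 0 <= m ->
  m <= dinf (Some x) -> m <= dinf (Some y) ->
  m ^+ 2 * dist x y <= da (Some x) (Some y).
Proof.
move=> m0 mx my; rewrite sph_da_SomeE mulrC ler_wpM2l // expr2.
by apply: ler_pM.
Qed.

(* dinf is 1-Lipschitz along the chain, so it stays >= m at every vertex, and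
   then each link dominates m^2 times its distance in X. *)
Lemma chain_len_ge_dist m u s v : 0 < m -> m <= dinf u - chain_len da u s v ->
  exists x y,
    [/\ u = Some x, v = Some y & m ^+ 2 * dist x y <= chain_len da u s v].
Proof.
move=> m0; elim: s u => [|z s IH] u /= hu.
  have := sph_da_ge0 u v; have := sph_da_inf_lipschitz u v => uv uv0.
  have [x ux] : exists x, u = Some x by apply: Some_of_inf_gt0; lra.
  have [y vy] : exists y, v = Some y by apply: Some_of_inf_gt0; lra.
  subst u v; exists x, y; split => //; apply: sph_da_ge_dist; lra.
have := sph_da_ge0 u z; have := sph_da_inf_lipschitz u z => uz uz0.
have zv0 := chain_len_ge0 sph_da_ge0 z s v.
have [|y' [y [zy' vy hy]]] := IH z; first by lra.
have [x ux] : exists x, u = Some x by apply: Some_of_inf_gt0; lra.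
subst u z v; exists x, y; split => //.
have : m ^+ 2 * dist x y' <= da (Some x) (Some y').
  by apply: sph_da_ge_dist; lra.
have := ler_wpM2l (exprn_ge0 2 (ltW m0)) (dist_triangle x y' y); lra.
Qed.

Lemma sph_ball_sub_ball x r v : r <= dinf (Some x) / 2 -> dh (Some x) v < r ->
  exists2 y, v = Some y & dist x y < 4 * r * (1 + dist x a) ^+ 2.
Proof.
move=> rx hv; have [s hs] : exists s, chain_len da (Some x) s v < r.
  have [|s] := sph_dist_approx (Some x) v (r - dh (Some x) v).
    by rewrite subr_gt0.
  by exists s; lra.
have Fx := sph_da_inf_gt0 x.
have [|x' [y [[<-] vy hxy]]] :=
  chain_len_ge_dist (dinf (Some x) / 2) (Some x) s v (divr_gt0 Fx (ltr0Sn _ 1)).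
  by lra.
exists y => //; have Nx := norm1_gt0 x; move: hxy rx; rewrite /=.
set N := 1 + dist x a => hxy rx.
rewrite -(ltr_pM2l (_ : 0 < (N^-1 / 2) ^+ 2)) ?exprn_gt0 ?divr_gt0 ?invr_gt0 //.
suff -> : (N^-1 / 2) ^+ 2 * (4 * r * N ^+ 2) = r by lra.
by field; rewrite gt_eqF.
Qed.

Lemma ball_sub_sph_ball x r y : r / 2 <= dinf (Some x) ->
  dist x y < r * (1 + dist x a) ^+ 2 / 8 -> dh (Some x) (Some y) < r.
Proof.
move=> /= rx xy; move: (norm1_gt0 x) rx xy; set N := 1 + dist x a => Nx rx xy.
have NxV : 0 < N^-1 by rewrite invr_gt0.
have r0 : 0 < r.
  have := dist_ge0 x y; have : 0 < N ^+ 2 by rewrite exprn_gt0.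
  by move: xy; rewrite expr2; nra.
have xyN : dist x y <= N / 4.
  have : r * N <= 2 by have := ler_wpM2r (ltW Nx) rx; rewrite mulVf ?gt_eqF //; lra.
  by move: xy; rewrite expr2 mulrA => ? ?; nra.
have NyV : (1 + dist y a)^-1 <= 4 / 3 * N^-1.
  have -> : 4 / 3 * N^-1 = (3 / 4 * N)^-1 by field; rewrite gt_eqF.
  rewrite lef_pV2 ?posrE ?mulr_gt0 //.
  have eN : N = 1 + dist x a by [].
  by have := dist_triangle x y a; lra.
apply: le_lt_trans (sph_dist_le_da _ _) _; rewrite sph_da_SomeE /=.
have : dist x y * (N^-1 * (1 + dist y a)^-1) <=
    r * N ^+ 2 / 8 * (N^-1 * (4 / 3 * N^-1)).
  apply: ler_pM => //; last by rewrite ler_wpM2l // ltW.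
  - by rewrite divr_ge0 // ltW.
  - exact: ltW.
have -> : r * N ^+ 2 / 8 * (N^-1 * (4 / 3 * N^-1)) = r / 6.
  by field; rewrite gt_eqF.
lra.
Qed.

Lemma dopen_sph_ball c r : dopen dist [set y | dh c (Some y) < r].
Proof.
move=> y /= hy; exists (r - dh c (Some y)); first by rewrite subr_gt0.
move=> z; rewrite /mball /= => hz; have := sph_dist_triangle c (Some y) (Some z).
have := sph_dist_le_dist y z; lra.
Qed.

End sphericalization.

Section powR_facts.
Context {R : realType}.

Lemma powRXn (x p : R) n : 0 <= x -> (x ^+ n) `^ p = (x `^ p) ^+ n.
Proof.
move=> x0; rewrite -(powR_mulrn n x0) -powRrM mulrC powRrM.
by rewrite powR_mulrn // powR_ge0.
Qed.

Lemma powR_mul2 (x p : R) : 0 <= x -> x `^ (2 * p) = (x `^ p) ^+ 2.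
Proof. by move=> x0; rewrite powRrM powR_mulrn // powRXn. Qed.

Lemma powRV (x p : R) : 0 < x -> x^-1 `^ p = (x `^ p)^-1.
Proof.
move=> x0; apply: (mulfI (_ : x `^ p != 0)); first by rewrite gt_eqF ?powR_gt0.
rewrite -powRM ?invr_ge0 ?ltW // mulfV ?gt_eqF // powR1.
by rewrite mulfV // gt_eqF // powR_gt0.
Qed.

Lemma powR_gt1 (x p : R) : 0 < p -> 1 < x -> 1 < x `^ p.
Proof.
move=> p0 x1; have := @gt0_ltr_powR R p p0 1 x; rewrite powR1 /=.
by apply; rewrite // nnegrE ltW // (lt_trans ltr01).
Qed.

Lemma inv_powR_le (p t u : R) : 0 <= p -> 0 < t -> t <= u ->
  (u `^ p)^-1 <= (t `^ p)^-1.
Proof.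
move=> p0 t0 tu; have u0 := lt_le_trans t0 tu.
rewrite lef_pV2 ?posrE ?powR_gt0 //.
by apply: ge0_ler_powR; rewrite // nnegrE ltW.
Qed.

End powR_facts.

Section dyadic_layers.
Context {R : realType} {T : Type} (h : T -> R) (s : R).
Hypothesis s_gt0 : 0 < s.

Definition dyadic_layer k :=
  [set y | s * 2 ^+ k < h y] `\` [set y | s * 2 ^+ k.+1 < h y].

Lemma bigcup_dyadic_layer : [set y | s < h y] = \bigcup_k dyadic_layer k.
Proof.
apply/seteqP; split => y /=.
- move=> sy; have exn : exists n, h y <= s * 2 ^+ n.
    exists (Num.truncn (h y / s)).+1; rewrite -ler_pdivrMl // mulrC ltW //.
    apply: lt_le_trans (truncnS_gt _) _; rewrite -natrX ler_nat ltnW //.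
    exact: ltn_expl.
  case: (ex_minnP exn) => [[|k]]; first by rewrite expr0 mulr1; lra.
  move=> hk hmin; exists k => //; split => /=; last by apply/negP; rewrite -leNgt.
  by rewrite ltNge; apply/negP => /hmin; rewrite ltnn.
- move=> [k _ [/= hk _]]; apply: le_lt_trans hk.
  by rewrite ler_pMr // exprn_ege1 // ler1n.
Qed.

Lemma trivIset_dyadic_layer : trivIset setT dyadic_layer.
Proof.
suff lt_disj i j y : (i < j)%N -> dyadic_layer i y -> dyadic_layer j y -> False.
  move=> i j _ _ [y [hi hj]].
  by case: (ltngtP i j) => // ij; [case: (lt_disj i j y) | case: (lt_disj j i y)].
move=> ij [_ /= /negP]; rewrite -leNgt => hi [/= hj _].
have : s * 2 ^+ i.+1 <= s * 2 ^+ j by rewrite ler_pM2l // ler_eXn2l // ltr1n.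
lra.
Qed.

End dyadic_layers.

Lemma nneseries_geometric_le {R : realType} (b z : R) : 0 <= b -> 0 < z < 1 ->
  (\sum_(0 <= k <oo) (geometric b z k)%:E <= (b / (1 - z))%:E)%E.
Proof.
move=> b0 /andP[z0 z1]; apply: lime_le.
  by apply: is_cvg_nneseries => n _ _; rewrite lee_fin geometric_ge0 // ltW.
near=> n; rewrite sumEFin lee_fin; apply: geometric_le_lim => //.
by rewrite gtr0_norm.
Unshelve. all: by end_near.
Qed.

Section integral_cst_bounds.
Context {R : realType} {dsp : measure_display} {T : measurableType dsp}
  (mu : {measure set T -> \bar R}) (f : T -> R) (D : set T).
Hypotheses (mD : measurable D) (mf : measurable_fun D (EFin \o f))
  (f_ge0 : forall y, D y -> 0 <= f y).

Lemma integral_ge_cst_measure (B : set T) c : measurable B -> B `<=` D ->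
  0 <= c -> (forall y, B y -> c <= f y) ->
  (c%:E * mu B <= \int[mu]_(y in D) (f y)%:E)%E.
Proof.
move=> mB BD c0 cf; apply: (@le_trans _ _ (\int[mu]_(y in B) (f y)%:E)%E).
  rewrite -integral_cst //; apply: ge0_le_integral => //.
  exact: measurable_funS mf.
by apply: ge0_subset_integral => // y Dy; rewrite lee_fin f_ge0.
Qed.

Lemma integral_le_cst_measure (B : set T) c : measurable B -> D `<=` B ->
  0 <= c -> (forall y, D y -> f y <= c) ->
  (\int[mu]_(y in D) (f y)%:E <= c%:E * mu B)%E.
Proof.
move=> mB DB c0 fc; apply: (@le_trans _ _ (c%:E * mu D)%E).
  by rewrite -integral_cst //; apply: ge0_le_integral => //.
by rewrite lee_wpmul2l ?lee_fin // le_measure ?inE.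
Qed.

End integral_cst_bounds.

Section sph_constants.
Context {R : realType} (Q C : R).
Hypotheses (Q_gt0 : 0 < Q) (C_gt0 : 0 < C).

(* Each constant adds up those of the two regimes: balls far from oo and balls
   reaching towards oo. *)
Definition sph_upper_const :=
  C * 4 `^ Q / (2 / 3) `^ (2 * Q) + C * 2 `^ Q / (1 - (2 `^ Q)^-1) * 3 `^ Q.

Definition sph_lower_const :=
  C * 8 `^ Q * (5 / 4) `^ (2 * Q)
  + C * 2 `^ Q * (2 * (2 * C ^+ 2) `^ Q^-1 + 2) `^ (2 * Q).

Lemma sph_upper_const_terms_ge0 :
  0 <= C * 4 `^ Q / (2 / 3) `^ (2 * Q) /\
  0 <= C * 2 `^ Q / (1 - (2 `^ Q)^-1) * 3 `^ Q.
Proof.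
have P2 : 1 < 2 `^ Q by rewrite powR_gt1 // ltr1n.
have C0 := ltW C_gt0.
split; first by rewrite divr_ge0 ?mulr_ge0 ?powR_ge0.
rewrite mulr_ge0 ?powR_ge0 // divr_ge0 ?mulr_ge0 ?powR_ge0 // subr_ge0.
by rewrite invr_le1 ?unitf_gt0 ?ltW // (lt_trans ltr01).
Qed.

Lemma sph_lower_const_terms_gt0 :
  0 < C * 8 `^ Q * (5 / 4) `^ (2 * Q) /\
  0 < C * 2 `^ Q * (2 * (2 * C ^+ 2) `^ Q^-1 + 2) `^ (2 * Q).
Proof.
split; rewrite !mulr_gt0 ?powR_gt0 //.
by rewrite addr_gt0 // mulr_gt0 // powR_gt0 // mulr_gt0 // exprn_gt0.
Qed.

End sph_constants.

Section sph_measure_balls.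
Context {R : realType} {dsp : measure_display} {T : measurableType dsp}
  (dist : T -> T -> R) (a : T) (mu : {measure set T -> \bar R}) (Q C : R).
Hypothesis dist_metric : is_metric dist.
Hypothesis dopen_measurable : forall A, dopen dist A -> measurable A.
Hypotheses (Q_gt0 : 0 < Q) (C_gt0 : 0 < C).
Hypothesis mu_ball_le :
  forall x r, 0 < r -> (mu (mball dist x r) <= (C * r `^ Q)%:E)%E.
Hypothesis mu_ball_ge :
  forall x r, 0 < r -> ((C^-1 * r `^ Q)%:E <= mu (mball dist x r))%E.

Local Notation N y := (1 + dist y a).
Local Notation weight y := ((N y `^ (2 * Q))^-1).
Local Notation dinf u := (sph_da dist a u None).
Local Notation mu_hat := (sph_measure dist a mu (2 * Q)).
Local Notation sph_ball := (mball (sph_dist dist a)).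

Let dist_ge0 x y : 0 <= dist x y. Proof. by case: dist_metric. Qed.
Let distC x y : dist x y = dist y x. Proof. by case: dist_metric. Qed.
Let dist_triangle x y z : dist x z <= dist x y + dist y z.
Proof. by case: dist_metric. Qed.
Let N_gt0 y : 0 < N y. Proof. by rewrite ltr_pwDl. Qed.

Lemma measurable_ball x r : measurable (mball dist x r).
Proof.
apply: dopen_measurable => y; rewrite /mball /= => xy.
exists (r - dist x y); first by rewrite subr_gt0.
by move=> z; rewrite /mball /= => yz; have := dist_triangle x y z; lra.
Qed.

Lemma measurable_N_gt t : measurable [set y | t < N y].
Proof.
apply: dopen_measurable => y /= ty; exists (N y - t); first by rewrite subr_gt0.
by move=> z; rewrite /mball /= => yz; have := dist_triangle y z a; lra.
Qed.

Lemma measurable_weight D : measurable_fun D (EFin \o fun y => weight y).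
Proof.
apply: measurable_funS (measurableT) _ _ => //; apply/measurable_EFinP.
have -> : (fun y => weight y) = (fun u => u `^ (- (2 * Q))) \o (fun y => N y).
  by apply/funext => y /=; rewrite powRN.
apply: measurableT_comp => //; apply: measurable_funD => //.
apply: (measurability _ (RGenInftyO.measurableE R)) => //.
move=> _ [_ [t ->] <-]; rewrite setTI; apply: dopen_measurable => y /=.
rewrite in_itv /= => yt; exists (t - dist y a); first by rewrite subr_gt0.
move=> z; rewrite /mball /= => yz; have := dist_triangle z y a.
by rewrite in_itv /= (distC z y); lra.
Qed.

Let weight_ge0 y : 0 <= weight y. Proof. by rewrite invr_ge0 powR_ge0. Qed.

Let integral_dyadic_layer_le s k : 0 < s ->
  (\int[mu]_(y in dyadic_layer (fun y => N y) s k) (weight y)%:E <=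
    (geometric (C * 2 `^ Q / s `^ Q) (2 `^ Q)^-1 k)%:E)%E.
Proof.
move=> s0; have s2k : 0 < s * 2 ^+ k by rewrite mulr_gt0 // exprn_gt0.
have s2k1 : 0 < s * 2 ^+ k.+1 by rewrite mulr_gt0 // exprn_gt0.
apply: (@le_trans _ _
    ((((s * 2 ^+ k) `^ (2 * Q))^-1)%:E * mu (mball dist a (s * 2 ^+ k.+1)))%E).
  apply: integral_le_cst_measure.
  - by apply: measurableD; exact: measurable_N_gt.
  - exact: measurable_weight.
  - by move=> *; exact: weight_ge0.
  - exact: measurable_ball.
  - by move=> y [_ /= /negP]; rewrite -leNgt /mball /= distC; lra.
  - by rewrite invr_ge0 powR_ge0.
  - by move=> y [/= /ltW ? _]; apply: inv_powR_le; rewrite // mulr_ge0 // ltW.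
apply: le_trans.
  by apply: lee_wpmul2l; [rewrite lee_fin invr_ge0 powR_ge0 | exact: mu_ball_le].
have P2 : 0 < 2 `^ Q by rewrite powR_gt0.
have Ps : 0 < s `^ Q by rewrite powR_gt0.
rewrite -EFinM lee_fin le_eqVlt; apply/orP; left; apply/eqP.
rewrite /geometric /= powR_mul2 ?ltW // !powRM ?exprn_ge0 ?ltW // !powRXn //.
rewrite exprVn (exprS (2 `^ Q) k); field.
by rewrite !gt_eqF ?exprn_gt0.
Qed.

Lemma integral_weight_tail_le t : 0 < t ->
  (\int[mu]_(y in [set y | (t^-1 < N y)%R]) (weight y)%:E <=
    (C * 2 `^ Q / (1 - (2 `^ Q)^-1) * t `^ Q)%:E)%E.
Proof.
move=> t0; have s0 : 0 < t^-1 by rewrite invr_gt0.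
have P2 : 1 < 2 `^ Q by rewrite powR_gt1 // ltr1n.
have mL k : measurable (dyadic_layer (fun y => N y) t^-1 k).
  by apply: measurableD; exact: measurable_N_gt.
rewrite bigcup_dyadic_layer // ge0_integral_bigcup //; [|exact: measurable_weight
  |by move=> y _; rewrite lee_fin|exact: trivIset_dyadic_layer].
apply: (@le_trans _ _ (\sum_(0 <= k <oo)
    (geometric (C * 2 `^ Q / t^-1 `^ Q) (2 `^ Q)^-1 k)%:E)%E).
  apply: lee_nneseries => k; last by move=> _; exact: integral_dyadic_layer_le.
  by move=> _ _; apply: integral_ge0 => y _; rewrite lee_fin.
apply: le_trans; first apply: nneseries_geometric_le.
- by rewrite mulr_ge0 ?invr_ge0 ?powR_ge0 // mulr_ge0 ?powR_ge0 // ltW.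
- by rewrite invr_gt0 invr_lt1 ?unitf_gt0 ?(lt_trans ltr01) // (lt_trans ltr01).
by rewrite lee_fin powRV // invrK mulrAC.
Qed.


Let measurable_sph_ball c r : measurable [set y | sph_dist dist a c (Some y) < r].
Proof. exact/dopen_measurable/(dopen_sph_ball a dist_metric). Qed.

Let N_ge_of_inv t y : 0 < t -> (N y)^-1 <= t^-1 -> t <= N y.
Proof. by move=> t0; rewrite lef_pV2 ?posrE. Qed.

Lemma sph_measure_ball_le_near x r : 0 < r -> r <= dinf (Some x) / 2 ->
  (mu_hat (sph_ball (Some x) r) <=
    (C * 4 `^ Q / (2 / 3) `^ (2 * Q) * r `^ Q)%:E)%E.
Proof.
move=> r0 rx; have Nx := N_gt0 x; have Nx2 : 0 < N x ^+ 2 by rewrite exprn_gt0.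
apply: (@le_trans _ _ ((((2 / 3 * N x) `^ (2 * Q))^-1)%:E *
    mu (mball dist x (4 * r * N x ^+ 2)))%E).
  apply: integral_le_cst_measure => //.
  - exact: measurable_sph_ball.
  - exact: measurable_weight.
  - exact: measurable_ball.
  - move=> y /= hy; have [_ [<-]] := sph_ball_sub_ball a dist_metric x r (Some y) rx hy.
    by rewrite /mball.
  - by rewrite invr_ge0 powR_ge0.
  move=> y /= hy; apply: inv_powR_le; first by rewrite mulr_ge0 // ltW.
    by rewrite mulr_gt0.
  apply: N_ge_of_inv; first by rewrite mulr_gt0.
  have := sph_dist_inf_lipschitz a dist_metric (Some x) (Some y).
  rewrite ler_norml => /andP[+ _]; move: rx hy; rewrite /mball /= invfM invf_div.
  lra.
apply: le_trans.
  apply: lee_wpmul2l; first by rewrite lee_fin invr_ge0 powR_ge0.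
  by apply: mu_ball_le; rewrite mulr_gt0 // mulr_gt0.
rewrite -EFinM lee_fin le_eqVlt; apply/orP; left; apply/eqP.
have [Nx0 r0'] := (ltW Nx, ltW r0).
rewrite !powRM ?mulr_ge0 ?invr_ge0 // (powR_mul2 (N x)) //.
by field; rewrite !gt_eqF ?powR_gt0.
Qed.

Let N_gt_of_inv t y : 0 < t -> (N y)^-1 < t -> t^-1 < N y.
Proof. by move=> t0; rewrite -ltf_pV2 ?posrE ?invr_gt0 // invrK. Qed.

Lemma sph_measure_ball_le_far c r : 0 < r -> dinf c < 2 * r ->
  (mu_hat (sph_ball c r) <=
    (C * 2 `^ Q / (1 - (2 `^ Q)^-1) * 3 `^ Q * r `^ Q)%:E)%E.
Proof.
move=> r0 cr; have r3 : 0 < 3 * r by rewrite mulr_gt0.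
have sub : [set y | sph_dist dist a c (Some y) < r] `<=` [set y | (3 * r)^-1 < N y].
  move=> y /= hy; apply: N_gt_of_inv => //.
  have := sph_dist_inf_lipschitz a dist_metric c (Some y).
  by rewrite ler_norml => /andP[+ _]; rewrite /=; lra.
apply: le_trans.
  apply: (ge0_subset_integral _ _ _ _ _ sub) => //.
  - exact: measurable_N_gt.
  - exact: measurable_weight.
  - by move=> y _; rewrite lee_fin.
apply: le_trans; first exact: integral_weight_tail_le r3.
by rewrite lee_fin powRM ?mulrA // ltW.
Qed.

Lemma sph_measure_ball_ge_near x r : 0 < r -> r / 2 <= dinf (Some x) ->
  (((C * 8 `^ Q * (5 / 4) `^ (2 * Q))^-1 * r `^ Q)%:E <=
    mu_hat (sph_ball (Some x) r))%E.
Proof.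
move=> r0 rx; have Nx := N_gt0 x; pose rho := r * N x ^+ 2 / 8.
have rho0 : 0 < rho by rewrite divr_gt0 // mulr_gt0 // exprn_gt0.
have Ny_le y : dist x y < rho -> N y <= 5 / 4 * N x.
  have : r * N x <= 2.
    by have := ler_wpM2r (ltW Nx) rx; rewrite /= mulVf ?gt_eqF //; lra.
  move=> rN xy; have := dist_triangle y x a; rewrite (distC y x).
  by move: xy; rewrite /rho expr2 mulrA; nra.
apply: (@le_trans _ _ ((((5 / 4 * N x) `^ (2 * Q))^-1)%:E *
    mu (mball dist x rho))%E); last first.
  apply: integral_ge_cst_measure => //.
  - exact: measurable_sph_ball.
  - exact: measurable_weight.
  - exact: measurable_ball.
  - by move=> y; rewrite /mball /=; exact: ball_sub_sph_ball.
  - by rewrite invr_ge0 powR_ge0.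
  - move=> y; rewrite /mball /= => /Ny_le Ny.
    by apply: inv_powR_le; rewrite // ?mulr_ge0 // ?mulr_gt0 // ltW.
apply: le_trans; last first.
  apply: lee_wpmul2l; first by rewrite lee_fin invr_ge0 powR_ge0.
  exact: mu_ball_ge.
rewrite -EFinM lee_fin le_eqVlt; apply/orP; left; apply/eqP.
have [Nx0 r0'] := (ltW Nx, ltW r0).
rewrite /rho !powRM ?mulr_ge0 ?invr_ge0 ?exprn_ge0 // (@powRV _ 8) //.
rewrite (powR_mul2 (N x)) //.
by field; rewrite !gt_eqF ?powR_gt0.
Qed.

(* lam^Q = 2 C^2, so that mu(B(x, lam R)) > mu(B(x, R)). *)
Local Notation lam := ((2 * C ^+ 2) `^ Q^-1).

Lemma exists_annulus x R1 : 0 < R1 -> exists z, R1 <= dist x z < lam * R1.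
Proof.
move=> R0; have lam0 : 0 < lam by rewrite powR_gt0 // mulr_gt0 // exprn_gt0.
have lamQ : lam `^ Q = 2 * C ^+ 2.
  by rewrite -powRrM mulVf ?gt_eqF // powRr1 // mulr_ge0 // exprn_ge0 // ltW.
apply: contrapT => no_z.
have sub : mball dist x (lam * R1) `<=` mball dist x R1.
  move=> y; rewrite /mball /= => hy; rewrite ltNge; apply/negP => R1y.
  by apply: no_z; exists y; rewrite R1y.
have := le_measure mu (mem_set (measurable_ball x (lam * R1)))
  (mem_set (measurable_ball x R1)) sub.
move=> /(le_trans (mu_ball_ge x _ (mulr_gt0 lam0 R0))).
move=> /le_trans/(_ (mu_ball_le x _ R0)).
rewrite lee_fin (powRM Q (ltW lam0) (ltW R0)) lamQ.
have -> : C^-1 * (2 * C ^+ 2 * R1 `^ Q) = 2 * (C * R1 `^ Q).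
  by field; rewrite gt_eqF.
have : 0 < C * R1 `^ Q by rewrite mulr_gt0 // powR_gt0.
lra.
Qed.

Lemma sph_measure_ball_ge_far c r : 0 < r -> r <= 2 -> dinf c < r / 2 ->
  (((C * 2 `^ Q * (2 * lam + 2) `^ (2 * Q))^-1 * r `^ Q)%:E <=
    mu_hat (sph_ball c r))%E.
Proof.
move=> r0 r2 cr; pose t := 2 / r.
have t0 : 0 < t by rewrite divr_gt0.
have t1 : 1 <= t by rewrite ler_pdivlMr // mul1r.
have lam0 : 0 < lam by rewrite powR_gt0 // mulr_gt0 // exprn_gt0.
have [z /andP[z1 z2]] := exists_annulus a (2 * t) (mulr_gt0 (ltr0Sn _ 1) t0).
have N_near y : dist z y < t -> t < N y <= (2 * lam + 2) * t.
  move=> zy; have := dist_triangle z y a; have := dist_triangle y z a.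
  rewrite (distC y z) (distC a z) in z1 z2 *; nra.
set L := 2 * lam + 2; have L0 : 0 < L by rewrite addr_gt0 // mulr_gt0.
apply: (@le_trans _ _ ((((L * t) `^ (2 * Q))^-1)%:E * mu (mball dist z t))%E);
    last first.
  apply: integral_ge_cst_measure => //.
  - exact: measurable_sph_ball.
  - exact: measurable_weight.
  - exact: measurable_ball.
  - move=> y; rewrite /mball /= => zy; have /andP[ty _] := N_near y zy.
    apply: le_lt_trans (sph_dist_le_via_inf a dist_metric _ _) _ => /=.
    have : (N y)^-1 < t^-1 by rewrite ltf_pV2 ?posrE.
    by rewrite /t invf_div; lra.
  - by rewrite invr_ge0 powR_ge0.
  - move=> y; rewrite /mball /= => zy; have /andP[_ Ny] := N_near y zy.
    by apply: inv_powR_le; rewrite // ?mulr_ge0 ?mulr_gt0 // ltW.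
apply: le_trans; last first.
  apply: lee_wpmul2l; first by rewrite lee_fin invr_ge0 powR_ge0.
  exact: mu_ball_ge.
rewrite -EFinM lee_fin le_eqVlt; apply/orP; left; apply/eqP.
have [L0' r0'] := (ltW L0, ltW r0).
rewrite /t !powRM ?divr_ge0 ?invr_ge0 // !(@powRV _ r) // !powR_mul2 //.
by field; rewrite !gt_eqF ?powR_gt0.
Qed.

Lemma sph_measure_ball_le c r : 0 < r ->
  (mu_hat (sph_ball c r) <= (sph_upper_const Q C * r `^ Q)%:E)%E.
Proof.
move=> r0; have [K1 K2] := sph_upper_const_terms_ge0 Q C Q_gt0 C_gt0.
have [cr|rc] := ltP (dinf c) (2 * r).
  apply: le_trans (sph_measure_ball_le_far c r r0 cr) _.
  by rewrite lee_fin ler_wpM2r ?powR_ge0 // /sph_upper_const lerDr.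
case: c rc => [x|] /= rc; last by exfalso; have := mulr_gt0 (ltr0Sn _ 1) r0; lra.
apply: le_trans (sph_measure_ball_le_near x r r0 _) _; first by rewrite /=; lra.
by rewrite lee_fin ler_wpM2r ?powR_ge0 // /sph_upper_const lerDl.
Qed.

Lemma sph_measure_ball_ge c r : 0 < r -> r <= 2 ->
  (((sph_lower_const Q C)^-1 * r `^ Q)%:E <= mu_hat (sph_ball c r))%E.
Proof.
move=> r0 r2; have [L1 L2] := sph_lower_const_terms_gt0 Q C C_gt0.
have [cr|rc] := ltP (dinf c) (r / 2).
  apply: le_trans (sph_measure_ball_ge_far c r r0 r2 cr).
  by rewrite lee_fin ler_wpM2r ?powR_ge0 // lef_pV2 ?posrE ?addr_gt0 // /sph_lower_const lerDr ltW.
case: c rc => [x|] /= rc; last by exfalso; have := divr_gt0 r0 (ltr0Sn _ 1); lra.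
apply: le_trans (sph_measure_ball_ge_near x r r0 rc).
by rewrite lee_fin ler_wpM2r ?powR_ge0 // lef_pV2 ?posrE ?addr_gt0 // /sph_lower_const lerDl ltW.
Qed.

End sph_measure_balls.

Lemma le_mdiam_unbounded {R : realType} {S : Type} {dist : S -> S -> R} r :
  unbounded dist -> 0 < r -> (r%:E <= 2%:E * mdiam dist)%E.
Proof.
move=> ubd r0; have [x [y rxy]] := ubd r.
apply: (@le_trans _ _ (2%:E * (dist x y)%:E)%E).
  by rewrite -EFinM lee_fin; lra.
by rewrite lee_wpmul2l // ereal_sup_ubound //; exists x => //; exists y.
Qed.

Theorem corollary4p4 (R : realType) (Q C : R) (hQ : 0 < Q) :
  exists C' : R,
  forall (dsp : measure_display) (T : measurableType dsp)
    (dist : T -> T -> R) (a : T) (mu : {measure set T -> \bar R}),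
    is_metric dist ->
    unbounded dist ->
    (forall A, dopen dist A -> measurable A) ->
    measure_is_complete mu ->
    (forall x r, 0 < r ->
       (0 < mu (mball dist x r))%E /\ (mu (mball dist x r) < +oo)%E) ->
    ahlfors_regular dist mu Q C ->
    ahlfors_regular (sph_dist dist a)
      (sph_measure dist a mu (2 * Q)) Q C'.
Proof.
exists (1 + sph_upper_const Q C + sph_lower_const Q C).
move=> dsp T dist a mu dm ubd dopen_meas _ _ [C1 mu_ball].
have C0 : 0 < C by lra.
have K0 : 0 <= sph_upper_const Q C.
  by have [] := sph_upper_const_terms_ge0 Q C hQ C0; rewrite /sph_upper_const; lra.
have L0 : 0 < sph_lower_const Q C.
  by have [] := sph_lower_const_terms_gt0 Q C C0; rewrite /sph_lower_const; lra.
have ball_ge x r (r0 : 0 < r) := (mu_ball x r r0 (le_mdiam_unbounded r ubd r0)).1.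
have ball_le x r (r0 : 0 < r) := (mu_ball x r r0 (le_mdiam_unbounded r ubd r0)).2.
split; first lra.
move=> c r r0 rdiam; have r2 : r <= 2.
  have := le_trans rdiam (lee_wpmul2l (lee0n 2) (sph_mdiam_le1 a dm)).
  by rewrite -EFinM lee_fin mulr1.
split.
  apply: le_trans (sph_measure_ball_ge dist a mu Q C dm dopen_meas hQ C0 ball_le ball_ge c r r0 r2).
  by rewrite lee_fin ler_wpM2r ?powR_ge0 // lef_pV2 ?posrE; lra.
apply: le_trans (sph_measure_ball_le dist a mu Q C dm dopen_meas hQ C0 ball_le c r r0) _.
by rewrite lee_fin ler_wpM2r ?powR_ge0 //; lra.
Qed.
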